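(* Let $\Bbbk$ be a field, let $\mathrm{Var}$ be a variety of $\Bbbk$-algebras with one binary product defined by a set of polylinear identities, and let $\text{tri-}\mathrm{Var}$ be the corresponding replicated variety of tri-algebras. Let $X$ be a set, $\dot X=\{\dot x\mid x\in X\}$ a disjoint copy of $X$, $F=\mathrm{Var}\langle X\cup\dot X\rangle$, $\varphi:F\to F$ the algebra homomorphism with $\varphi(x)=\varphi(\dot x)=x$ ($x\in X$), and $F^{(3)}$ the space $F$ with operations $f\vdash g=\varphi(f)g$, $f\dashv g=f\varphi(g)$, $f\perp g=fg$. Let $V$ be the subalgebra of $F^{(3)}$ generated by $\dot X$. Then $V$ is isomorphic to the free algebra in $\text{tri-}\mathrm{Var}$ generated by $X$; more precisely, for every $A\in\text{tri-}\mathrm{Var}$ and every map $\alpha:X\to A$ there is a unique homomorphism of tri-algebras $\chi:V\to A$ with $\chi(\dot x)=\alpha(x)$ for all $x\in X$.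
   Context: Tri-algebras: linear spaces with three bilinear operations $\dashv$ (=$\mu_{\{1\}}$), $\vdash$ (=$\mu_{\{2\}}$), $\perp$ (=$\mu_{\{1,2\}}$). For a polylinear element $\Phi(x_1,\dots,x_n)$ of the free algebra in one binary operation $\mu$ and nonempty $H\subseteq\{1,\dots,n\}$, $\Phi_H$ is obtained by viewing each monomial as a binary rooted tree with leaves $x_1,\dots,x_n$, marking the leaves $x_i$, $i\in H$, and replacing the label $\mu$ at each node by $\mu_S$, where $S\subseteq\{1,2\}$ is the set of branches (left=1, right=2) containing a marked leaf, or by $\mu_{\{1\}}$ if $S=\varnothing$. The variety $\text{tri-}\mathrm{Var}$ consists of tri-algebras satisfying $(a* b)\vdash c=(a\star b)\vdash c$ and $a\dashv(b* c)=a\dashv(b\star c)$ for all $*,\star\in\{\vdash,\dashv,\perp\}$, and $\Phi_H=0$ for every defining polylinear identity $\Phi$ of $\mathrm{Var}$ of degree $n$ and every nonempty $H\subseteq\{1,\dots,n\}$. *)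

From HB Require Import structures.
From mathcomp Require Import all_boot all_order all_algebra.
Set Implicit Arguments. Unset Strict Implicit. Unset Printing Implicit Defensive.
Import GRing.Theory.
Local Open Scope ring_scope.

(* Binary rooted trees with leaves labelled by variable indices
   (variable x_{i+1} of the paper is index i; indices start at 0). *)
Inductive btree := Leaf of nat | Node of btree & btree.

Fixpoint leaves (t : btree) : seq nat :=
  match t with Leaf i => [:: i] | Node l r => leaves l ++ leaves r end.

Section Defs.
Variable K : fieldType.

(* An element of the free (nonassociative) algebra in one binary operation,
   of declared degree n = P.1, given as a finite linear combination P.2 of
   monomials (binary trees). *)
Definition poly_identity := (nat * seq (K * btree))%type.

Definition polylinear (P : poly_identity) : bool :=
  all (fun ct => perm_eq (leaves ct.2) (iota 0 P.1)) P.2.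

Definition bilinear_op (A : lmodType K) (m : A -> A -> A) : Prop :=
  forall (c : K) (x y z : A),
    m (c *: x + y) z = c *: m x z + m y z /\
    m z (c *: x + y) = c *: m z x + m z y.

Fixpoint evalT (A : lmodType K) (mul : A -> A -> A) (a : nat -> A) (t : btree) : A :=
  match t with
  | Leaf i => a i
  | Node l r => mul (evalT mul a l) (evalT mul a r)
  end.

Definition eval_id (A : lmodType K) (mul : A -> A -> A) (a : nat -> A)
  (P : poly_identity) : A :=
  \sum_(ct <- P.2) ct.1 *: evalT mul a ct.2.

Definition in_Var (Ids : poly_identity -> Prop) (A : lmodType K)
  (mul : A -> A -> A) : Prop :=
  bilinear_op mul /\ forall P, Ids P -> forall a : nat -> A, eval_id mul a P = 0.

Definition alg_hom (A B : lmodType K) (mA : A -> A -> A) (mB : B -> B -> B)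
  (f : A -> B) : Prop :=
  (forall (c : K) x y, f (c *: x + y) = c *: f x + f y) /\
  (forall x y, f (mA x y) = mB (f x) (f y)).

Definition free_Var_alg (Ids : poly_identity -> Prop) (G : Type)
  (F : lmodType K) (mF : F -> F -> F) (iota : G -> F) : Prop :=
  in_Var Ids mF /\
  forall (B : lmodType K) (mB : B -> B -> B), in_Var Ids mB ->
  forall beta : G -> B,
    exists f : F -> B,
      [/\ alg_hom mF mB f, (forall g, f (iota g) = beta g) &
          forall f' : F -> B, alg_hom mF mB f' ->
            (forall g, f' (iota g) = beta g) -> forall y, f' y = f y].

(* Phi_H: at each node use mu_S, S = set of branches containing a marked leaf;
   dl = mu_{1} (-|), dr = mu_{2} (|-), pp = mu_{1,2} (perp); S empty -> dl. *)
Fixpoint evalH (A : lmodType K) (dl dr pp : A -> A -> A) (H : pred nat)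
  (a : nat -> A) (t : btree) : A :=
  match t with
  | Leaf i => a i
  | Node l r =>
      let o := match has H (leaves l), has H (leaves r) with
               | false, true => dr
               | true, true => pp
               | _, _ => dl
               end in
      o (evalH dl dr pp H a l) (evalH dl dr pp H a r)
  end.

Definition eval_idH (A : lmodType K) (dl dr pp : A -> A -> A) (H : pred nat)
  (a : nat -> A) (P : poly_identity) : A :=
  \sum_(ct <- P.2) ct.1 *: evalH dl dr pp H a ct.2.

Definition triop (A : Type) (dl dr pp : A -> A -> A) (i : 'I_3) : A -> A -> A :=
  match val i with 0 => dl | 1 => dr | _ => pp end.

Definition tri_identities_on (Ids : poly_identity -> Prop) (A : lmodType K)
  (D : A -> Prop) (dl dr pp : A -> A -> A) : Prop :=
  (forall (i j : 'I_3) (x y z : A), D x -> D y -> D z ->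
     dr (triop dl dr pp i x y) z = dr (triop dl dr pp j x y) z /\
     dl x (triop dl dr pp i y z) = dl x (triop dl dr pp j y z)) /\
  (forall P, Ids P -> forall H : pred nat, (exists2 k, (k < P.1)%N & H k) ->
     forall a : nat -> A, (forall k, D (a k)) -> eval_idH dl dr pp H a P = 0).

Definition in_triVar (Ids : poly_identity -> Prop) (A : lmodType K)
  (dl dr pp : A -> A -> A) : Prop :=
  [/\ bilinear_op dl, bilinear_op dr, bilinear_op pp &
      tri_identities_on Ids (fun _ => True) dl dr pp].

Definition gen_subalg (F : lmodType K) (dl dr pp : F -> F -> F)
  (S : F -> Prop) (f : F) : Prop :=
  forall P : F -> Prop,
    (forall s, S s -> P s) -> P 0 ->
    (forall (c : K) x y, P x -> P y -> P (c *: x + y)) ->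
    (forall x y, P x -> P y -> [/\ P (dl x y), P (dr x y) & P (pp x y)]) ->
    P f.

Definition tri_hom_on (F A : lmodType K) (D : F -> Prop)
  (dlF drF ppF : F -> F -> F) (dl dr pp : A -> A -> A) (chi : F -> A) : Prop :=
  (forall (c : K) x y, D x -> D y -> chi (c *: x + y) = c *: chi x + chi y) /\
  (forall x y, D x -> D y ->
     [/\ chi (dlF x y) = dl (chi x) (chi y),
         chi (drF x y) = dr (chi x) (chi y) &
         chi (ppF x y) = pp (chi x) (chi y)]).

End Defs.

From HB Require Import structures.
From mathcomp Require Import all_boot all_order all_algebra.
Set Implicit Arguments. Unset Strict Implicit. Unset Printing Implicit Defensive.
Import GRing.Theory.
Local Open Scope ring_scope.

(** For a tri-algebra [A] of tri-Var, [A * A] with the product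
    [(a, x) * (b, y) = (a _|_ b, a |- y + x -| b + x _|_ y)] is an algebra of
    Var.  Its first factor [(A, _|_)] is, since [Phi] computed with [_|_] alone
    is [Phi_{1..n}].  By polylinearity it suffices to evaluate an identity on
    elements each lying in one factor; marking the variables taken in the
    second factor, the value is [(0, Phi_H)]: [x -| a] and [a |- y] do not
    change when the products inside [a] are interchanged ([tri_congr]), so the
    [_|_]-evaluations of unmarked subtrees may replace the [-|]-evaluations
    that [Phi_H] prescribes.  The homomorphism [psi : F -> A * A] with
    [psi (iota (inl x)) = (alpha x, 0)] and [psi (iota (inr x)) = (0, alpha x)]
    satisfies [psi (phi f) = (theta f, 0)], [theta] the [_|_]-homomorphism
    extending [alpha] on both copies, and on [V] one has [psi f = (0, chi f)]
    with [theta f] congruent to [chi f]; this makes [chi] a tri-homomorphism. *)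

Lemma btree_eq_dec : comparable btree.
Proof. rewrite /comparable /decidable; decide equality; exact: eq_comparable. Qed.
HB.instance Definition _ := comparableMixin btree_eq_dec.

Section PolyIdentities.
Variable K : fieldType.

Section Bilinear.
Variables (M : lmodType K) (m : M -> M -> M).
Hypothesis m_bil : bilinear_op m.

Lemma bilDl x y z : m (x + y) z = m x z + m y z.
Proof. by have := (m_bil 1 x y z).1; rewrite !scale1r. Qed.

Lemma bilDr x y z : m z (x + y) = m z x + m z y.
Proof. by have := (m_bil 1 x y z).2; rewrite !scale1r. Qed.

Lemma bil0l z : m 0 z = 0.
Proof. by apply: (addrI (m 0 z)); rewrite -bilDl !addr0. Qed.

Lemma bil0r z : m z 0 = 0.
Proof. by apply: (addrI (m z 0)); rewrite -bilDr !addr0. Qed.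

End Bilinear.

Lemma lincomb_eq0 (M N : lmodType K) (f : M -> N) :
  f (1 *: 0 + 0) = 1 *: f 0 + f 0 -> f 0 = 0.
Proof. by rewrite !scale1r addr0 => h; apply: (addrI (f 0)); rewrite addr0 -h. Qed.

Lemma alg_hom0 (M N : lmodType K) (mM : M -> M -> M) (mN : N -> N -> N) f :
  alg_hom mM mN f -> f 0 = 0.
Proof. by case=> f_lin _; apply: lincomb_eq0. Qed.

Lemma alg_hom_comp (M N P : lmodType K) (mM : M -> M -> M) (mN : N -> N -> N)
    (mP : P -> P -> P) f g :
  alg_hom mM mN f -> alg_hom mN mP g -> alg_hom mM mP (g \o f).
Proof. by case=> f1 f2 [g1 g2]; split=> [c x y | x y] /=; rewrite ?f1 ?g1 ?f2 ?g2. Qed.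

Lemma sumZ_pair (M N : lmodType K) (I : Type) (s : seq I) (c : I -> K)
    (f : I -> M) (g : I -> N) :
  \sum_(i <- s) c i *: (f i, g i) = (\sum_(i <- s) c i *: f i, \sum_(i <- s) c i *: g i).
Proof.
elim: s => [|i s IHs]; first by rewrite !big_nil.
by rewrite !big_cons IHs.
Qed.

Section Evaluation.
Variable M : lmodType K.

Lemma evalT_ext (m : M -> M -> M) a a' t :
  {in leaves t, a =1 a'} -> evalT m a t = evalT m a' t.
Proof.
elim: t => [i|l IHl r IHr] /= eq_a; first by apply: eq_a; rewrite inE.
by rewrite IHl ?IHr // => i ti; apply: eq_a; rewrite mem_cat ti ?orbT.
Qed.

Lemma leaves_neq0 t : leaves t != [::].
Proof.
by elim: t => [i|l IHl r _] //=; rewrite -size_eq0 size_cat addn_eq0 size_eq0 (negPf IHl).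
Qed.

Variables dl dr pp : M -> M -> M.

Lemma evalH_unmarked (H : pred nat) a t :
  ~~ has H (leaves t) -> evalH dl dr pp H a t = evalT dl a t.
Proof.
elim: t => [i|l IHl r IHr] //=; rewrite has_cat negb_or => /andP [nHl nHr].
by rewrite (negPf nHl) (negPf nHr) IHl // IHr.
Qed.

Lemma evalH_predT a t : evalH dl dr pp predT a t = evalT pp a t.
Proof.
elim: t => [i|l IHl r IHr] //=.
by rewrite !has_predT !lt0n !size_eq0 !leaves_neq0 IHl IHr.
Qed.

End Evaluation.

Section Polylinear.
Variable P : poly_identity K.
Hypothesis P_lin : polylinear P.

Lemma polylinear_mem (ct : K * btree) i :
  ct \in P.2 -> (i \in leaves ct.2) = (i < P.1)%N.
Proof. by move/(allP P_lin)/perm_mem->; rewrite mem_iota. Qed.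

Lemma polylinear_count (ct : K * btree) k :
  ct \in P.2 -> (k < P.1)%N -> count_mem k (leaves ct.2) = 1%N.
Proof.
move/(allP P_lin)/permP-> => ltkn.
by rewrite count_uniq_mem ?iota_uniq // mem_iota ltkn.
Qed.

Lemma polylinear_deg_gt0 : P.2 != [::] -> (0 < P.1)%N.
Proof.
case E: P.2 => [|ct s] // _.
have ct_P : ct \in P.2 by rewrite E mem_head.
have [i ti] : exists i, i \in leaves ct.2.
  by case: (leaves ct.2) (leaves_neq0 ct.2) => [|i s'] // _; exists i; rewrite mem_head.
by rewrite (polylinear_mem _ ct_P) in ti; apply: leq_ltn_trans ti.
Qed.

End Polylinear.

Section Splitting.
Variables (M : lmodType K) (m : M -> M -> M).
Hypothesis m_bil : bilinear_op m.

Lemma evalT_splitD a k u v t :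
  a k = u + v -> count_mem k (leaves t) = 1%N ->
  evalT m a t = evalT m (fun i => if i == k then u else a i) t
              + evalT m (fun i => if i == k then v else a i) t.
Proof.
have same b t' : k \notin leaves t' ->
    evalT m (fun i => if i == k then b else a i) t' = evalT m a t'.
  by move=> kt'; apply: evalT_ext => i it'; case: eqP => // eik; rewrite -eik it' in kt'.
move=> ak; elim: t => [i|l IHl r IHr] /=.
  by rewrite addn0 eq_sym; case: eqP => // <-.
rewrite count_cat; case Ekl: (count_mem k (leaves l)) => [|[|n]] //.
- have kl : k \notin leaves l by apply/count_memPn.
  by rewrite add0n => /IHr->; rewrite !(same _ l) // (bilDr m_bil).
- rewrite add1n => -[/count_memPn kr].
  by rewrite IHl // !(same _ r) // (bilDl m_bil).
Qed.

Lemma eval_id_splitD (P : poly_identity K) a k u v :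
  polylinear P -> (k < P.1)%N -> a k = u + v ->
  eval_id m a P = eval_id m (fun i => if i == k then u else a i) P
                + eval_id m (fun i => if i == k then v else a i) P.
Proof.
move=> P_lin ltkn ak; rewrite /eval_id -big_split /=; apply: eq_big_seq => ct ct_P.
by rewrite -scalerDr -evalT_splitD ?(polylinear_count P_lin).
Qed.

Lemma eval_id_eq0_spanning (S : M -> Prop) (P : poly_identity K) :
  polylinear P -> (forall u, exists v w, [/\ S v, S w & u = v + w]) ->
  (forall a, (forall i, (i < P.1)%N -> S (a i)) -> eval_id m a P = 0) ->
  forall a, eval_id m a P = 0.
Proof.
move=> P_lin S_span S_eq0.
suff S_from k a : (forall i, (k <= i < P.1)%N -> S (a i)) -> eval_id m a P = 0.
  by move=> a; apply: (S_from P.1) => i /andP [le_i]; rewrite ltnNge le_i.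
elim: k a => [|k IHk] a Sa; first by apply: S_eq0 => i; apply: Sa.
have [ltkn | lenk] := ltnP k P.1; last first.
  by apply: IHk => i /andP [leki ltin]; have := leq_trans lenk leki; rewrite leqNgt ltin.
have [v [w [Sv Sw akvw]]] := S_span (a k).
rewrite (eval_id_splitD P_lin ltkn akvw) !IHk ?addr0 // => i /andP [leki ltin];
  by case: eqP => [//|/eqP nik]; apply: Sa; rewrite ltin andbT ltn_neqAle eq_sym nik.
Qed.

End Splitting.

End PolyIdentities.

Section GeneratedSubalgebra.
Variables (K : fieldType) (F : lmodType K) (dl dr pp : F -> F -> F) (S : F -> Prop).
Let V := gen_subalg dl dr pp S.

Lemma gen_subalg_gen s : S s -> V s.
Proof. by move=> Ss P PS _ _ _; apply: PS. Qed.

Lemma gen_subalg0 : V 0.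
Proof. by move=> P _ P0 _ _. Qed.

Lemma gen_subalg_lin c x y : V x -> V y -> V (c *: x + y).
Proof.
by move=> Vx Vy P PS P0 Plin Pops; apply: (Plin); [apply: (Vx P) | apply: (Vy P)].
Qed.

Lemma gen_subalg_ops x y : V x -> V y -> [/\ V (dl x y), V (dr x y) & V (pp x y)].
Proof.
by move=> Vx Vy; split=> P PS P0 Plin Pops;
  case: (Pops x y (Vx P PS P0 Plin Pops) (Vy P PS P0 Plin Pops)).
Qed.

End GeneratedSubalgebra.

Section FreeAlgebra.
Variables (K : fieldType) (Ids : poly_identity K -> Prop).
Variables (G : Type) (F : lmodType K) (mF : F -> F -> F) (iota : G -> F).
Hypothesis F_free : free_Var_alg Ids mF iota.

Lemma free_hom_ext (B : lmodType K) (mB : B -> B -> B) (f g : F -> B) :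
  in_Var Ids mB -> alg_hom mF mB f -> alg_hom mF mB g ->
  (forall x, f (iota x) = g (iota x)) -> f =1 g.
Proof.
move=> B_Var f_hom g_hom fg y.
have [h [_ _ h_uniq]] := F_free.2 B mB B_Var (f \o iota).
by rewrite (h_uniq f) ?(h_uniq g) //= => x; rewrite fg.
Qed.

End FreeAlgebra.

Definition dlF (K : fieldType) (F : lmodType K) (mF : F -> F -> F) (phi : F -> F) f g :=
  mF f (phi g).
Definition drF (K : fieldType) (F : lmodType K) (mF : F -> F -> F) (phi : F -> F) f g :=
  mF (phi f) g.

Section ReplicatedFree.
Variables (K : fieldType) (Ids : poly_identity K -> Prop).
Hypothesis Ids_lin : forall P, Ids P -> polylinear P.
Variables (X : Type) (F : lmodType K) (mF : F -> F -> F) (iota : X + X -> F).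
Hypothesis F_free : free_Var_alg Ids mF iota.
Variable phi : F -> F.
Hypothesis phi_hom : alg_hom mF mF phi.
Hypothesis phi_iota : forall x, phi (iota (inl x)) = iota (inl x) /\
                                phi (iota (inr x)) = iota (inl x).

Lemma phi_idem f : phi (phi f) = phi f.
Proof.
apply: (free_hom_ext F_free F_free.1 (alg_hom_comp phi_hom phi_hom) phi_hom).
by case=> x; rewrite /comp ?(phi_iota x).2 (phi_iota x).1 ?(phi_iota x).1.
Qed.

Lemma phi_triop i x y : phi (triop (dlF mF phi) (drF mF phi) mF i x y) = mF (phi x) (phi y).
Proof.
case: phi_hom => _ phiM.
by case: i => -[|[|n]] ?; rewrite /triop /= /dlF /drF phiM ?phi_idem.
Qed.

Lemma phi_evalT_dlF a t : phi (evalT (dlF mF phi) a t) = evalT mF (phi \o a) t.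
Proof.
case: phi_hom => _ phiM.
by elim: t => [i|l IHl r IHr] //=; rewrite /dlF phiM phi_idem IHl IHr.
Qed.

Lemma evalH_F3_marked (H : pred nat) a t : has H (leaves t) ->
  evalH (dlF mF phi) (drF mF phi) mF H a t
  = evalT mF (fun i => if H i then a i else phi (a i)) t.
Proof.
have unmarked_phi t' : ~~ has H (leaves t') ->
    phi (evalH (dlF mF phi) (drF mF phi) mF H a t')
    = evalT mF (fun i => if H i then a i else phi (a i)) t'.
  move=> nHt'; rewrite evalH_unmarked // phi_evalT_dlF; apply: evalT_ext => i it' /=.
  by rewrite (negPf (hasPn nHt' i it')).
elim: t => [i|l IHl r IHr] /=; first by rewrite orbF => ->.
rewrite has_cat; case Hl: (has H (leaves l)); case Hr: (has H (leaves r)) => //= _.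
- by rewrite IHl ?IHr.
- by rewrite /dlF IHl // unmarked_phi ?Hr.
- by rewrite /drF IHr // unmarked_phi ?Hl.
Qed.

Lemma F3_tri_identities (D : F -> Prop) :
  tri_identities_on Ids D (dlF mF phi) (drF mF phi) mF.
Proof.
split=> [i j x y z _ _ _ | P IdsP H [k ltkn Hk] a _].
  by rewrite /dlF /drF !phi_triop.
rewrite -(F_free.1.2 P IdsP (fun i => if H i then a i else phi (a i))).
apply: eq_big_seq => ct ct_P; rewrite evalH_F3_marked //.
by apply/hasP; exists k; rewrite ?(polylinear_mem (Ids_lin IdsP) _ ct_P).
Qed.

End ReplicatedFree.

Section TriAlgebra.
Variables (K : fieldType) (Ids : poly_identity K -> Prop).
Hypothesis Ids_lin : forall P, Ids P -> polylinear P.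
Variables (A : lmodType K) (dl dr pp : A -> A -> A).
Hypothesis A_tri : in_triVar Ids dl dr pp.

Let i_dl : 'I_3 := ord0.
Let i_dr : 'I_3 := Ordinal (isT : (1 < 3)%N).
Let i_pp : 'I_3 := ord_max.

Lemma dl_bil : bilinear_op dl. Proof. by case: A_tri. Qed.
Lemma dr_bil : bilinear_op dr. Proof. by case: A_tri. Qed.
Lemma pp_bil : bilinear_op pp. Proof. by case: A_tri. Qed.

Lemma dr_triop i x y z : dr (triop dl dr pp i x y) z = dr (dl x y) z.
Proof. by case: A_tri => _ _ _ [tri_ops _]; case: (tri_ops i i_dl x y z). Qed.

Lemma dl_triop i x y z : dl x (triop dl dr pp i y z) = dl x (dl y z).
Proof. by case: A_tri => _ _ _ [tri_ops _]; case: (tri_ops i i_dl x y z). Qed.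

Lemma dr_dr x y z : dr (dr x y) z = dr (dl x y) z.
Proof. exact: (dr_triop i_dr). Qed.

Lemma dl_dr x y z : dl x (dr y z) = dl x (dl y z).
Proof. exact: (dl_triop i_dr). Qed.

Definition tri_congr (a b : A) :=
  (forall y, dr a y = dr b y) /\ (forall y, dl y a = dl y b).

Lemma tri_congrxx a : tri_congr a a.
Proof. by []. Qed.

Lemma tri_congr_lin c a a' b b' :
  tri_congr a a' -> tri_congr b b' -> tri_congr (c *: a + b) (c *: a' + b').
Proof.
move=> [ar al] [br bl]; split=> y.
  by rewrite !(dr_bil _ _ _ y).1 ar br.
by rewrite !(dl_bil _ _ _ y).2 al bl.
Qed.

Lemma tri_congr_triop i j a a' b b' : tri_congr a a' -> tri_congr b b' ->
  tri_congr (triop dl dr pp i a b) (triop dl dr pp j a' b').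
Proof.
move=> [ar al] [br bl]; split=> y.
  by rewrite !dr_triop -dr_dr ar dr_dr bl.
by rewrite !dl_triop -dl_dr ar dl_dr bl.
Qed.

Lemma tri_congr_evalT c t : tri_congr (evalT pp c t) (evalT dl c t).
Proof. by elim: t => [i|l IHl r IHr] //=; apply: (tri_congr_triop i_pp i_dl). Qed.

Lemma pp_in_Var : in_Var Ids pp.
Proof.
split=> [|P IdsP a]; first exact: pp_bil.
have [P2_0 | P2_neq0] := eqVneq P.2 [::]; first by rewrite /eval_id P2_0 big_nil.
case: A_tri => _ _ _ [_ Phi_H_eq0].
rewrite -(Phi_H_eq0 P IdsP predT _ a) //; last first.
  by exists 0%N; rewrite ?(polylinear_deg_gt0 (Ids_lin IdsP)).
by apply: eq_bigr => ct _; rewrite evalH_predT.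
Qed.

Definition extmul (u v : A * A) : A * A :=
  (pp u.1 v.1, dr u.1 v.2 + dl u.2 v.1 + pp u.2 v.2).

Lemma extmul_bil : bilinear_op extmul.
Proof.
move=> c u v w; rewrite /extmul /=.
rewrite (pp_bil _ _ _ _).1 (pp_bil _ _ _ _).2 (dr_bil _ _ _ _).1 (dr_bil _ _ _ _).2.
rewrite (dl_bil _ _ _ _).1 (dl_bil _ _ _ _).2 (pp_bil _ _ _ _).1 (pp_bil _ _ _ _).2.
by split; congr pair; rewrite /= !scalerDr [X in X + _ = _]addrACA; apply: addrACA.
Qed.

Lemma extmul11 a b : extmul (a, 0) (b, 0) = (pp a b, 0).
Proof. by rewrite /extmul /= (bil0r dr_bil) (bil0l dl_bil) (bil0l pp_bil) !addr0. Qed.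

Lemma extmul12 a y : extmul (a, 0) (0, y) = (0, dr a y).
Proof. by rewrite /extmul /= (bil0r pp_bil) (bil0l dl_bil) (bil0l pp_bil) !addr0. Qed.

Lemma extmul21 x b : extmul (0, x) (b, 0) = (0, dl x b).
Proof. by rewrite /extmul /= (bil0l pp_bil) (bil0l dr_bil) (bil0r pp_bil) add0r addr0. Qed.

Lemma extmul22 x y : extmul (0, x) (0, y) = (0, pp x y).
Proof. by rewrite /extmul /= (bil0l pp_bil) (bil0l dr_bil) (bil0r dl_bil) !add0r. Qed.

Lemma evalT_extmul_unmarked a t : {in leaves t, forall i, (a i).2 = 0} ->
  evalT extmul a t = (evalT pp (fst \o a) t, 0).
Proof.
elim: t => [i|l IHl r IHr] /= a2_0; first by case: (a i) (a2_0 i (mem_head _ _)) => ? ? /= ->.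
rewrite IHl ?IHr ?extmul11 // => i ti; apply: a2_0; rewrite mem_cat ti ?orbT //.
Qed.

Lemma evalT_extmul_marked (H : pred nat) a t :
  {in leaves t, forall i, if H i then (a i).1 = 0 else (a i).2 = 0} ->
  has H (leaves t) ->
  evalT extmul a t = (0, evalH dl dr pp H (fun i => if H i then (a i).2 else (a i).1) t).
Proof.
elim: t => [i|l IHl r IHr] /= a_pure.
  by rewrite orbF; have := a_pure i (mem_head _ _); case: (H i) (a i) => // -[? ?] /= ->.
have a_pure_l : {in leaves l, forall i, if H i then (a i).1 = 0 else (a i).2 = 0}.
  by move=> i il; apply: a_pure; rewrite mem_cat il.
have a_pure_r : {in leaves r, forall i, if H i then (a i).1 = 0 else (a i).2 = 0}.
  by move=> i ir; apply: a_pure; rewrite mem_cat ir orbT.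
have unmarked t' : {in leaves t', forall i, if H i then (a i).1 = 0 else (a i).2 = 0} ->
    ~~ has H (leaves t') ->
    [/\ evalT extmul a t' = (evalT pp (fst \o a) t', 0) &
        evalH dl dr pp H (fun i => if H i then (a i).2 else (a i).1) t'
        = evalT dl (fst \o a) t'].
  move=> a_pure' /hasPn nHt'; rewrite evalH_unmarked; last exact/hasPn.
  split; last by apply: evalT_ext => i it' /=; rewrite (negPf (nHt' i it')).
  apply: evalT_extmul_unmarked => i it'.
  by have := a_pure' i it'; rewrite (negPf (nHt' i it')).
rewrite has_cat; case Hl: (has H (leaves l)); case Hr: (has H (leaves r)) => //= _.
- by rewrite IHl // IHr // extmul22.
- have [-> ->] := unmarked r a_pure_r (negbT Hr).
  by rewrite IHl // extmul21 ((tri_congr_evalT _ _).2).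
- have [-> ->] := unmarked l a_pure_l (negbT Hl).
  by rewrite IHr // extmul12 ((tri_congr_evalT _ _).1).
Qed.

Lemma extmul_in_Var : in_Var Ids extmul.
Proof.
split=> [|P IdsP]; first exact: extmul_bil.
have P_lin := Ids_lin IdsP.
apply: (eval_id_eq0_spanning extmul_bil (S := fun u => u.1 = 0 \/ u.2 = 0)) => // [u|a a_pure].
  exists (u.1, 0), (0, u.2); split; [by right | by left |].
  by case: u => a x; congr pair; rewrite /= ?addr0 ?add0r.
pose H i := (a i).1 == 0.
pose b i := if H i then (a i).2 else (a i).1.
have a_pure' ct : ct \in P.2 ->
    {in leaves ct.2, forall i, if H i then (a i).1 = 0 else (a i).2 = 0}.
  move=> ct_P i; rewrite (polylinear_mem P_lin _ ct_P) /H => /a_pure.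
  by case: eqP => // a1_neq0 [].
have [/hasP [k] | /hasPn noH] := boolP (has H (iota 0 P.1)).
  rewrite mem_iota add0n => /andP [_ ltkn] Hk.
  transitivity (\sum_(ct <- P.2) ct.1 *: ((0 : A), evalH dl dr pp H b ct.2)).
    apply: eq_big_seq => ct ct_P; rewrite (@evalT_extmul_marked H) //; first exact: a_pure'.
    by apply/hasP; exists k; rewrite ?(polylinear_mem P_lin _ ct_P).
  rewrite sumZ_pair big1 => [|ct _]; last exact: scaler0.
  case: A_tri => _ _ _ [_ Phi_H_eq0].
  by have := Phi_H_eq0 P IdsP H (ex_intro2 _ _ k ltkn Hk) b; rewrite /eval_idH => ->.
transitivity (\sum_(ct <- P.2) ct.1 *: (evalT pp (fst \o a) ct.2, (0 : A))).
  apply: eq_big_seq => ct ct_P; rewrite evalT_extmul_unmarked // => i it.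
  have := a_pure' ct ct_P i it; rewrite (negPf (noH i _)) //.
  by rewrite mem_iota -(polylinear_mem P_lin _ ct_P).
rewrite sumZ_pair [X in (_, X)]big1 => [|ct _]; last exact: scaler0.
by have := pp_in_Var.2 P IdsP (fst \o a); rewrite /eval_id => ->.
Qed.

Lemma extmul_inl_hom : alg_hom pp extmul (fun a => (a, 0)).
Proof.
split=> [c a b | a b]; last by rewrite extmul11.
by congr pair; rewrite /= scaler0 addr0.
Qed.

Section Universal.
Variables (X : Type) (F : lmodType K) (mF : F -> F -> F) (iota : X + X -> F).
Hypothesis F_free : free_Var_alg Ids mF iota.
Variable phi : F -> F.
Hypothesis phi_hom : alg_hom mF mF phi.
Hypothesis phi_iota : forall x, phi (iota (inl x)) = iota (inl x) /\
                                phi (iota (inr x)) = iota (inl x).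
Variable alpha : X -> A.

Let V := gen_subalg (dlF mF phi) (drF mF phi) mF (fun f => exists x, f = iota (inr x)).

Section Extension.
Variables (psi : F -> A * A) (theta : F -> A).
Hypothesis psi_hom : alg_hom mF extmul psi.
Hypothesis psi_iota : forall x, psi (iota (inl x)) = (alpha x, 0) /\
                                psi (iota (inr x)) = (0, alpha x).
Hypothesis theta_hom : alg_hom mF pp theta.
Hypothesis theta_iota : forall x, theta (iota (inl x)) = alpha x /\
                                  theta (iota (inr x)) = alpha x.

Let chi f := (psi f).2.

Lemma psi_phi f : psi (phi f) = (theta f, 0).
Proof.
apply: (free_hom_ext F_free extmul_in_Var (alg_hom_comp phi_hom psi_hom)
                     (alg_hom_comp theta_hom extmul_inl_hom)).
case=> x; rewrite /comp ?(phi_iota x).1 ?(phi_iota x).2 (psi_iota x).1.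
  by rewrite (theta_iota x).1.
by rewrite (theta_iota x).2.
Qed.

Lemma theta_phi f : theta (phi f) = theta f.
Proof.
by have := psi_phi (phi f); rewrite (phi_idem F_free phi_hom phi_iota) psi_phi => -[].
Qed.

Lemma psi_V f : V f -> psi f = (0, chi f) /\ tri_congr (theta f) (chi f).
Proof.
move=> Vf; apply: (Vf (fun f => psi f = (0, chi f) /\ tri_congr (theta f) (chi f))).
- by move=> _ [x ->]; rewrite /chi (psi_iota x).2 (theta_iota x).2.
- by rewrite /chi (alg_hom0 psi_hom) (alg_hom0 theta_hom).
- move=> c x y [psi_x cx] [psi_y cy]; case: psi_hom theta_hom => psi_lin _ [theta_lin _].
  rewrite /chi psi_lin theta_lin psi_x psi_y /=; split; last exact: tri_congr_lin.
  by congr pair; rewrite /= scaler0 addr0.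
- move=> x y [psi_x cx] [psi_y cy]; case: psi_hom theta_hom => _ psiM [_ thetaM].
  rewrite /chi /dlF /drF !psiM !psi_phi !thetaM !theta_phi psi_x psi_y.
  rewrite extmul21 extmul12 extmul22 /=.
  split; split=> //.
  + exact: (tri_congr_triop i_pp i_dl cx (tri_congrxx _)).
  + exact: (tri_congr_triop i_pp i_dr (tri_congrxx _) cy).
  + exact: (tri_congr_triop i_pp i_pp cx cy).
Qed.

Lemma chi_tri_hom : tri_hom_on V (dlF mF phi) (drF mF phi) mF dl dr pp chi.
Proof.
split=> [c x y _ _ | x y Vx Vy]; first by case: psi_hom => psi_lin _; rewrite /chi psi_lin.
have [psi_x [cx_r _]] := psi_V Vx; have [psi_y [_ cy_l]] := psi_V Vy.
case: psi_hom => _ psiM.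
rewrite /chi /dlF /drF !psiM !psi_phi psi_x psi_y extmul21 extmul12 extmul22 /=.
by split; rewrite ?cy_l ?cx_r.
Qed.

Lemma chi_unique chi' : tri_hom_on V (dlF mF phi) (drF mF phi) mF dl dr pp chi' ->
  (forall x, chi' (iota (inr x)) = alpha x) -> forall f, V f -> chi' f = chi f.
Proof.
move=> [chi'_lin chi'M] chi'_iota f Vf.
have chi'0 : chi' 0 = 0 by apply: lincomb_eq0; apply: chi'_lin; apply: gen_subalg0.
apply: (proj2 (Vf (fun f => V f /\ chi' f = chi f) _ _ _ _)).
- move=> _ [x ->]; split; first by apply: gen_subalg_gen; exists x.
  by rewrite chi'_iota /chi (psi_iota x).2.
- by split; [apply: gen_subalg0 | rewrite chi'0 /chi (alg_hom0 psi_hom)].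
- move=> c x y [Vx chi'x] [Vy chi'y]; split; first exact: gen_subalg_lin.
  by rewrite chi'_lin // chi'x chi'y (chi_tri_hom.1 c x y Vx Vy).
- move=> x y [Vx chi'x] [Vy chi'y].
  have [Vdl Vdr Vpp] := gen_subalg_ops Vx Vy.
  have [chi'_dl chi'_dr chi'_pp] := chi'M x y Vx Vy.
  have [chi_dl chi_dr chi_pp] := chi_tri_hom.2 x y Vx Vy.
  by split; split=> //; rewrite ?chi'_dl ?chi'_dr ?chi'_pp ?chi_dl ?chi_dr ?chi_pp chi'x chi'y.
Qed.

End Extension.

Lemma F3_universal : exists chi : F -> A,
  [/\ tri_hom_on V (dlF mF phi) (drF mF phi) mF dl dr pp chi,
      (forall x, chi (iota (inr x)) = alpha x) &
      forall chi' : F -> A, tri_hom_on V (dlF mF phi) (drF mF phi) mF dl dr pp chi' ->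
        (forall x, chi' (iota (inr x)) = alpha x) -> forall f, V f -> chi' f = chi f].
Proof.
have [psi [psi_hom psi_iota _]] := F_free.2 _ _ extmul_in_Var
  (fun g => match g with inl x => (alpha x, 0) | inr x => (0, alpha x) end).
have [theta [theta_hom theta_iota _]] := F_free.2 _ _ pp_in_Var
  (fun g => match g with inl x => alpha x | inr x => alpha x end).
have psi_iota' x : psi (iota (inl x)) = (alpha x, 0) /\ psi (iota (inr x)) = (0, alpha x).
  by rewrite !psi_iota.
have theta_iota' x : theta (iota (inl x)) = alpha x /\ theta (iota (inr x)) = alpha x.
  by rewrite !theta_iota.
exists (fun f => (psi f).2); split.
- exact: chi_tri_hom psi_hom psi_iota' theta_hom theta_iota'.
- by move=> x; rewrite psi_iota.
- exact: chi_unique psi_hom psi_iota' theta_hom theta_iota'.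
Qed.

End Universal.

End TriAlgebra.

Theorem theorem3p3 (K : fieldType) (Ids : poly_identity K -> Prop)
  (HIds : forall P, Ids P -> polylinear P)
  (X : Type) (F : lmodType K) (mF : F -> F -> F) (iota : X + X -> F)
  (Hfree : free_Var_alg Ids mF iota)
  (phi : F -> F) (Hphi : alg_hom mF mF phi)
  (Hphix : forall x, phi (iota (inl x)) = iota (inl x) /\
                     phi (iota (inr x)) = iota (inl x)) :
  let dlF := fun f g => mF f (phi g) in
  let drF := fun f g => mF (phi f) g in
  let ppF := mF in
  let V := gen_subalg dlF drF ppF (fun f => exists x, f = iota (inr x)) in
  tri_identities_on Ids V dlF drF ppF /\
  forall (A : lmodType K) (dl dr pp : A -> A -> A),
    in_triVar Ids dl dr pp ->
    forall alpha : X -> A,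
      exists chi : F -> A,
        [/\ tri_hom_on V dlF drF ppF dl dr pp chi,
            (forall x, chi (iota (inr x)) = alpha x) &
            forall chi' : F -> A, tri_hom_on V dlF drF ppF dl dr pp chi' ->
              (forall x, chi' (iota (inr x)) = alpha x) ->
              forall f, V f -> chi' f = chi f].
Proof.
move=> dlF' drF' ppF V; split; first exact: (F3_tri_identities HIds Hfree Hphi Hphix).
by move=> A dl dr pp A_tri alpha; apply: (F3_universal HIds A_tri Hfree Hphi Hphix).
Qed.
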